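(* Let $\odot$ be a pseudo-multiplication on $[0,\infty]$ with left identity $1_{\odot}$, and let $F_{\odot}$ be the set of $\odot$-finite elements. Then $F_{\odot}$ is either $\{0\}$, or $[0,\infty]$, or of the form $[0,\phi)$ for some $\phi\in(1_{\odot},\infty]$ such that $O(\phi)=\phi$.
   Context: A pseudo-multiplication is a binary operation $\odot:[0,\infty]\times[0,\infty]\to[0,\infty]$ such that: $\odot$ is associative; $\odot$ is continuous on $(0,\infty)\times[0,\infty]$; for every $t$, the map $s\mapsto s\odot t$ is continuous on $(0,\infty]$; $\odot$ is nondecreasing in each argument; there is a left identity element $1_{\odot}$, i.e. $1_{\odot}\odot t=t$ for all $t$; there are no zero divisors, i.e. $s\odot t=0$ implies $s=0$ or $t=0$; and $0$ is an annihilator, i.e. $0\odot t=t\odot 0=0$ for all $t$. For $t\in[0,\infty]$ put $O(t)=\inf_{s>0} s\odot t$. An element $t$ is called $\odot$-finite if $O(t)=0$, and $\odot$-infinite otherwise. *)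

(* [0,oo] is modelled as the nonnegative part of
   the extended reals \bar R over an abstract R : realType. *)
From HB Require Import structures.
From mathcomp Require Import all_boot all_order all_algebra.
From mathcomp Require Import all_classical all_reals all_analysis.
Set Implicit Arguments. Unset Strict Implicit. Unset Printing Implicit Defensive.
Import Order.TTheory GRing.Theory Num.Theory.
Local Open Scope classical_set_scope.
Local Open Scope ereal_scope.

Section PseudoMult.
Context {R : realType}.

Definition nnE : set (\bar R) := [set t | 0 <= t].

Definition pseudo_mult (op : \bar R -> \bar R -> \bar R) (one : \bar R) : Prop :=
  (forall s t, 0 <= s -> 0 <= t -> 0 <= op s t) /\
      (forall a b c, 0 <= a -> 0 <= b -> 0 <= c -> op (op a b) c = op a (op b c)) /\
      {within [set p : \bar R * \bar R | (0 < p.1 < +oo) /\ 0 <= p.2],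
         continuous (fun p => op p.1 p.2)} /\
      (forall t, 0 <= t -> {within [set s : \bar R | 0 < s], continuous (fun s => op s t)}) /\
      ((forall s s' t, 0 <= s -> s <= s' -> 0 <= t -> op s t <= op s' t) /\
       (forall s t t', 0 <= s -> 0 <= t -> t <= t' -> op s t <= op s t')) /\
      (0 <= one /\ (forall t, 0 <= t -> op one t = t)) /\
      (forall s t, 0 <= s -> 0 <= t -> op s t = 0 -> s = 0 \/ t = 0) /\
      (forall t, 0 <= t -> op 0 t = 0 /\ op t 0 = 0).

Definition Oinf (op : \bar R -> \bar R -> \bar R) (t : \bar R) : \bar R :=
  ereal_inf [set op s t | s in [set s : \bar R | 0 < s]].

Definition odot_finite (op : \bar R -> \bar R -> \bar R) : set (\bar R) :=
  [set t | 0 <= t /\ Oinf op t = 0].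

End PseudoMult.

(* O is idempotent: since [s ⊙ (u ⊙ t) = (s ⊙ u) ⊙ t >= O(t)], continuity of [⊙]
   in its right argument gives [s ⊙ O(t) >= O(t)] for every [s > 0].  Hence
   [t] is finite iff [O(t)] is.  If [O(1)] is positive, so is every [O(u)]
   ([O(1) ⊙ u <= (s ⊙ 1) ⊙ u = s ⊙ u]), and only [0] is finite.  Otherwise the
   finite elements form a down-set containing [1]; continuity makes
   [t |-> O(t)] upper semicontinuous from the right, so the down-set cannot
   contain its supremum [phi] unless it is everything, and [O(phi) = phi]
   because [O(phi) <= 1 ⊙ phi = phi] while [O(phi)] is not finite. *)
From HB Require Import structures.
From mathcomp Require Import all_boot all_order all_algebra.
From mathcomp Require Import all_classical all_reals all_analysis.
Set Implicit Arguments. Unset Strict Implicit. Unset Printing Implicit Defensive.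
Import Order.TTheory GRing.Theory Num.Theory.
Local Open Scope classical_set_scope.
Local Open Scope ereal_scope.

Section PseudoMultiplication.
Variables (R : realType) (op : \bar R -> \bar R -> \bar R) (one : \bar R).

Hypothesis op_ge0 : forall s t, 0 <= s -> 0 <= t -> 0 <= op s t.
Hypothesis opA : forall a b c, 0 <= a -> 0 <= b -> 0 <= c ->
  op (op a b) c = op a (op b c).
Hypothesis op_cont :
  {within [set p : \bar R * \bar R | (0 < p.1 < +oo) /\ 0 <= p.2],
    continuous (fun p => op p.1 p.2)}.
Hypothesis le_opl : forall s s' t, 0 <= s -> s <= s' -> 0 <= t -> op s t <= op s' t.
Hypothesis le_opr : forall s t t', 0 <= s -> 0 <= t -> t <= t' -> op s t <= op s t'.
Hypothesis one_ge0 : 0 <= one.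
Hypothesis op1 : forall t, 0 <= t -> op one t = t.
Hypothesis op_eq0 : forall s t, 0 <= s -> 0 <= t -> op s t = 0 -> s = 0 \/ t = 0.
Hypothesis op0 : forall t, 0 <= t -> op 0 t = 0 /\ op t 0 = 0.

Local Notation O := (Oinf op).
Local Notation F := (odot_finite op).

Lemma op_gt0 s t : 0 < s -> 0 < t -> 0 < op s t.
Proof.
move=> s0 t0; rewrite lt0e op_ge0 ?ltW // andbT.
by apply/eqP => /(op_eq0 (ltW s0) (ltW t0)) [] /eqP; rewrite gt_eqF.
Qed.

Lemma one_gt0 : 0 < one.
Proof.
rewrite lt0e one_ge0 andbT; apply/eqP => one0.
have := op1 (lee01 : 0 <= 1); rewrite one0 (op0 lee01).1.
by move/eqP; rewrite eq_sym onee_eq0.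
Qed.

Lemma op_lt_right (s r : R) (a : \bar R) : (0 < s)%R -> (0 <= r)%R ->
  op s%:E r%:E < a ->
  exists2 d : R, (0 < d)%R & forall y : R, (r <= y < r + d)%R -> op s%:E y%:E < a.
Proof.
move=> s0 r0 lta.
have dom_sr : [set p : \bar R * \bar R | (0 < p.1 < +oo) /\ 0 <= p.2] (s%:E, r%:E).
  by rewrite /= lte_fin s0 ltry lee_fin r0.
have nbhs_lta : nbhs (op s%:E r%:E) [set z | z < a].
  have := @op_ge0 s%:E r%:E; rewrite !lee_fin (ltW s0) r0 => /(_ isT isT).
  move: lta; case: (op s%:E r%:E) => [v| |] //; last by rewrite ltNge leey.
  case: a => [a'| |] //.
    by rewrite lte_fin => va _; exact: (@nbhs_open_ereal_lt _ v (fun _ => a')).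
  move=> _ _; apply: (filterS _ (@nbhs_open_ereal_lt _ v (fun x => x + 1)%R _)).
    by move=> z /= /lt_le_trans; apply; rewrite leey.
  by rewrite ltrDl.
have /subspace_continuousP /(_ _ dom_sr _ nbhs_lta) := op_cont.
case=> -[Q1 Q2] /= [nQ1 /nbhs_EFin /nbhs_ballP [d /= d0 ballQ2]] sub.
exists d => // y /andP[ry yrd]; apply: (sub (s%:E, y%:E)).
  split; first exact: nbhs_singleton nQ1.
  by apply: ballQ2; rewrite /ball /= distrC ger0_norm ?subr_ge0 // ltrBlDl.
by rewrite /= lte_fin s0 ltry lee_fin (le_trans r0 ry).
Qed.

Lemma Oinf_le s t : 0 < s -> O t <= op s t.
Proof. by move=> s0; apply: ereal_inf_lbound; exists s. Qed.

Lemma Oinf_ge0 t : 0 <= t -> 0 <= O t.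
Proof.
by move=> t0; apply: le_ereal_inf_tmp => _ [s /= s0 <-]; exact: op_ge0 (ltW s0) t0.
Qed.

Lemma Oinf_le_id t : 0 <= t -> O t <= t.
Proof. by move=> t0; rewrite -{2}(op1 t0); exact: Oinf_le _ one_gt0. Qed.

Lemma le_Oinf t t' : 0 <= t -> t <= t' -> O t <= O t'.
Proof.
move=> t0 tt'; apply: le_ereal_inf_tmp => _ [s /= s0 <-].
exact: le_trans (Oinf_le t s0) (le_opr (ltW s0) t0 tt').
Qed.

Lemma Oinf0 : O 0 = 0.
Proof. by apply/eqP; rewrite eq_le Oinf_le_id // Oinf_ge0. Qed.

Lemma Oinf_lt_real t a : 0 <= t -> O t < a ->
  exists2 s : R, (0 < s)%R & op s%:E t < a.
Proof.
move=> t0 /ereal_inf_lt [_ [[s| |] /= s0 <-] lta] //; first by exists s.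
exists 1%R => //; apply: le_lt_trans lta.
by apply: le_opl; rewrite ?leey ?lee_fin.
Qed.

Lemma Oinf_lt_right (r : R) a : (0 <= r)%R -> O r%:E < a ->
  exists2 y : R, (r < y)%R & O y%:E < a.
Proof.
move=> r0; have r0' : 0 <= r%:E by rewrite lee_fin.
move=> /(Oinf_lt_real r0') [s s0 lta].
have [d d0 near_r] := op_lt_right s0 r0 lta.
have d20 : (0 < d / 2)%R by rewrite divr_gt0.
exists (r + d / 2)%R; first by rewrite ltrDl.
apply: le_lt_trans (Oinf_le _ _) (near_r _ _); first by rewrite lte_fin.
by rewrite lerDl (ltW d20) ltrD2l ltr_pdivrMr // ltr_pMr // ltr1n.
Qed.

Lemma Oinf_le_op_op s u t : 0 < s -> 0 < u -> 0 <= t -> O t <= op s (op u t).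
Proof.
move=> s0 u0 t0; rewrite -opA ?(ltW s0) ?(ltW u0) //.
by apply: Oinf_le; exact: op_gt0.
Qed.

Lemma Oinf_le_op_Oinf s t : 0 < s -> 0 <= t -> O t <= op s (O t).
Proof.
move=> s0 t0.
suff real_s (x : R) : (0 < x)%R -> O t <= op x%:E (O t).
  case: s s0 => [x|_|] //; first by rewrite lte_fin; exact: real_s.
  by apply: le_trans (real_s 1%R ltr01) _; apply: le_opl; rewrite ?leey ?Oinf_ge0.
move=> x0; have x0' : 0 < x%:E by rewrite lte_fin.
case Ot : (O t) => [r| |]; last by rewrite leNye.
- have r0 : (0 <= r)%R by rewrite -lee_fin -Ot Oinf_ge0.
  rewrite leNgt; apply/negP => /(op_lt_right x0 r0) [d d0 near_r].
  have : O t < (r + d)%:E by rewrite Ot lte_fin ltrDl.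
  case/ereal_inf_lt => _ [u /= u0 <-] ut_lt.
  have := Oinf_le t u0; have := Oinf_le_op_op x0' u0 t0.
  rewrite Ot; case: (op u t) ut_lt => [y| |] //; rewrite !lee_fin lte_fin => yrd.
  by move=> + ry; rewrite leNgt near_r // ry yrd.
- have := Oinf_le t lte01; rewrite Ot leye_eq => /eqP e.
  by rewrite -{1}Ot -e; apply: Oinf_le_op_op.
Qed.

Lemma Oinf_idem t : 0 <= t -> O (O t) = O t.
Proof.
move=> t0; apply/eqP; rewrite eq_le Oinf_le_id ?Oinf_ge0 //=.
by apply: le_ereal_inf_tmp => _ [s /= s0 <-]; exact: Oinf_le_op_Oinf s0 t0.
Qed.

Lemma odot_finite_Oinf t : 0 <= t -> F (O t) <-> F t.
Proof.
by move=> t0; rewrite /odot_finite /= Oinf_idem //; split=> -[_ ->]; rewrite ?Oinf_ge0.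
Qed.

Lemma Oinf_gt0 u : 0 < O one -> 0 < u -> 0 < O u.
Proof.
move=> O1 u0; apply: lt_le_trans (op_gt0 O1 u0) _.
apply: le_ereal_inf_tmp => _ [s /= s0 <-].
rewrite -{2}(op1 (ltW u0)) -opA ?(ltW s0) ?(ltW u0) //.
by apply: le_opl; rewrite ?(ltW O1) ?(ltW u0) ?Oinf_le.
Qed.

Lemma odot_finite_le t t' : 0 <= t -> t <= t' -> F t' -> F t.
Proof.
move=> t0 tt' [_ Ot']; split=> //.
by apply/eqP; rewrite eq_le Oinf_ge0 // andbT -Ot' le_Oinf.
Qed.

Lemma odot_finite_lt_sup t : 0 <= t -> t < ereal_sup F -> F t.
Proof.
by move=> t0 /ereal_sup_gt [t' Ft' tt']; exact: odot_finite_le t0 (ltW tt') Ft'.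
Qed.

Lemma odot_finite_sup_notin : O one = 0 -> ~ nnE `<=` F -> ~ F (ereal_sup F).
Proof.
move=> O1 not_all Fsup; apply: not_all => t t0.
have one_le_sup : one <= ereal_sup F by apply: ereal_sup_ubound; split.
case Esup : (ereal_sup F) Fsup one_le_sup => [p| |] [p0 Op] one_le_p; last first.
- by move: p0; rewrite leNgt ltNy0.
- by apply: (odot_finite_le t0 (leey t)); split.
have p_gt0 : (0 < p)%R by rewrite -lte_fin (lt_le_trans one_gt0).
have Op_lt : O p%:E < p%:E by rewrite Op lte_fin.
have [y py Oy_lt] := Oinf_lt_right (ltW p_gt0) Op_lt.
have y0 : 0 <= y%:E by rewrite lee_fin (le_trans (ltW p_gt0) (ltW py)).
have Fy : F y%:E.
  by apply/odot_finite_Oinf => //; apply: odot_finite_lt_sup; rewrite ?Esup ?Oinf_ge0.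
by have := ereal_sup_ubound Fy; rewrite Esup lee_fin leNgt py.
Qed.

Theorem odot_finite_classification :
  F = [set 0] \/ F = nnE \/
  exists phi : \bar R, one < phi /\ O phi = phi /\ F = [set t | 0 <= t < phi].
Proof.
have [Oone0|Oone_neq0] := eqVneq (O one) 0; last first.
  left; apply/seteqP; split=> [t [t0 Ot]|_ ->]; last by split; rewrite ?Oinf0.
  have O1_gt0 : 0 < O one by rewrite lt0e Oone_neq0 Oinf_ge0.
  apply/eqP; rewrite eq_le t0 andbT leNgt; apply/negP => /(Oinf_gt0 O1_gt0).
  by rewrite Ot ltxx.
have [all_finite|not_all] := pselect (nnE `<=` F).
  by right; left; apply/seteqP; split=> [t []|].
right; right; set phi := ereal_sup F.
have phi_notin := odot_finite_sup_notin Oone0 not_all.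
have F_eq : F = [set t | 0 <= t < phi].
  apply/seteqP; split=> [t Ft|t /andP[]]; last exact: odot_finite_lt_sup.
  rewrite /= lt_neqAle (ereal_sup_ubound Ft) Ft.1 andbT.
  by apply/eqP => tphi; apply: phi_notin; move: Ft; rewrite tphi.
have phi0 : 0 <= phi by apply: ereal_sup_ubound; split; rewrite ?Oinf0.
exists phi; split; last split => //.
  have Fone : F one by split.
  by move: Fone; rewrite F_eq => /andP[].
apply/eqP; rewrite eq_le Oinf_le_id //= leNgt; apply/negP => Ophi_lt.
by apply/phi_notin/odot_finite_Oinf => //; apply: odot_finite_lt_sup; rewrite ?Oinf_ge0.
Qed.

End PseudoMultiplication.

Theorem lemma2p5 (R : realType) (op : \bar R -> \bar R -> \bar R) (one : \bar R) :
  pseudo_mult op one ->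
  odot_finite op = [set 0] \/
  odot_finite op = @nnE R \/
  exists phi : \bar R, one < phi /\ Oinf op phi = phi /\
    odot_finite op = [set t | 0 <= t < phi].
Proof.
case=> op_ge0 [opA [op_cont [_ [[le_opl le_opr] [[one_ge0 op1] [op_eq0 op0]]]]]].
exact: odot_finite_classification.
Qed.
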